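(* For every integer $n\ge2$, $K(n)\ge n-1$.
   Context: Electricity division instance: supply $S>0$ and demands $D=(D[1],\dots,D[n])$ with $0<D[i]\le S$. A schedule partitions the time interval into finitely many subintervals, each assigned a set of households whose total demand is at most $S$; the egalitarian connection-time is the maximum, over schedules, of the minimum over households of the fraction of time the household is connected. For an integer $k\ge1$, a $k$-times bin packing of $D$ assigns $k$ copies of each household (item of size $D[i]$) to bins so that each bin has total size at most $S$ and no bin contains two copies of the same item; $OPT(D_k)$ is the minimum number of bins. $K(D)$ is the smallest positive integer $k$ such that the egalitarian connection-time of the instance equals $k/OPT(D_k)$, and $K(n)$ is the maximum of $K(D)$ over all instances with $n$ households. *)

From HB Require Import structures.
From mathcomp Require Import all_boot all_order all_algebra.
From mathcomp Require Import reals.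
Set Implicit Arguments. Unset Strict Implicit. Unset Printing Implicit Defensive.
Import Order.TTheory GRing.Theory Num.Theory.
Local Open Scope ring_scope.

Section ElectricityDivision.
Variables (R : realType) (n : nat).

Definition instance (S : R) (D : 'I_n -> R) : Prop :=
  0 < S /\ forall i, 0 < D i /\ D i <= S.

Definition feasible (S : R) (D : 'I_n -> R) (A : {set 'I_n}) : bool :=
  \sum_(i in A) D i <= S.

(* A schedule of the (normalized, unit-length) time interval: a finite list of
   consecutive subintervals, given by their (positive) lengths summing to 1,
   each assigned a feasible set of connected households. *)
Definition schedule (S : R) (D : 'I_n -> R) (sch : seq (R * {set 'I_n})) : Prop :=
  (forall p, p \in sch -> 0 < p.1 /\ feasible S D p.2) /\
  \sum_(p <- sch) p.1 = 1.

Definition conn_time (sch : seq (R * {set 'I_n})) (i : 'I_n) : R :=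
  \sum_(p <- sch | i \in p.2) p.1.

Definition is_min_conn (sch : seq (R * {set 'I_n})) (t : R) : Prop :=
  (exists i, conn_time sch i = t) /\ (forall i, t <= conn_time sch i).

Definition egal_time (S : R) (D : 'I_n -> R) (t : R) : Prop :=
  (exists sch, schedule S D sch /\ is_min_conn sch t) /\
  (forall sch t', schedule S D sch -> is_min_conn sch t' -> t' <= t).

(* A k-times bin packing: a list of bins (sets of items, so no bin contains
   two copies of the same item), each of total size at most S, such that
   every item lies in exactly k bins. *)
Definition ktimes_packing (S : R) (D : 'I_n -> R) (k : nat)
    (bins : seq {set 'I_n}) : Prop :=
  (forall B, B \in bins -> feasible S D B) /\
  (forall i : 'I_n, count (fun B : {set 'I_n} => i \in B) bins = k).

Definition is_OPT (S : R) (D : 'I_n -> R) (k m : nat) : Prop :=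
  (exists bins, ktimes_packing S D k bins /\ size bins = m) /\
  (forall bins, ktimes_packing S D k bins -> (m <= size bins)%N).

Definition egal_eq_ratio (S : R) (D : 'I_n -> R) (k : nat) : Prop :=
  exists (t : R) (m : nat), egal_time S D t /\ is_OPT S D k m /\
    t = k%:R / m%:R.

End ElectricityDivision.

From HB Require Import structures.
From mathcomp Require Import all_boot all_order all_algebra.
From mathcomp Require Import reals.
Set Implicit Arguments. Unset Strict Implicit. Unset Printing Implicit Defensive.
Import Order.TTheory GRing.Theory Num.Theory.
Local Open Scope ring_scope.

(* Take n households of unit demand and supply n - 1.  Double counting shows
   that any schedule connects households for a total time of at most n - 1,
   so the egalitarian time is at most (n - 1)/n, and any k-times packing has
   at least n k/(n - 1) bins; both bounds are attained by the n sets "all but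
   one household".  Hence k/OPT(D_k) = (n - 1)/n forces k n = (n - 1) OPT(D_k),
   and since n - 1 and n are coprime, n - 1 divides k. *)

Lemma egal_time_uniq (R : realType) (n : nat) (S : R) (D : 'I_n -> R) t1 t2 :
  egal_time S D t1 -> egal_time S D t2 -> t1 = t2.
Proof.
move=> [[s1 [hs1 hm1]] max1] [[s2 [hs2 hm2]] max2].
by apply/eqP; rewrite eq_le (max2 _ _ hs1 hm1) (max1 _ _ hs2 hm2).
Qed.

Lemma sum_count_mem (T : finType) (bins : seq {set T}) :
  (\sum_(i : T) count (fun B : {set T} => i \in B) bins = \sum_(B <- bins) #|B|)%N.
Proof.
under eq_bigr => i _ do rewrite -sum1_count big_mkcond /=.
rewrite exchange_big /=; apply: eq_bigr => B _.
by rewrite -big_mkcond /= sum1_card.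
Qed.

Lemma sum_conn_time (R : realType) (n : nat) (sch : seq (R * {set 'I_n})) :
  \sum_i conn_time sch i = \sum_(p <- sch) p.1 * #|p.2|%:R.
Proof.
rewrite /conn_time.
under eq_bigr => i _ do rewrite big_mkcond /=.
rewrite exchange_big /=; apply: eq_bigr => p _.
by rewrite -big_mkcond /= sumr_const mulr_natr.
Qed.

Section UnitDemands.
Variables (R : realType) (n c : nat).

Local Notation S := (c%:R : R).
Local Notation D := (fun _ : 'I_n => 1 : R).

Lemma feasible_unit (A : {set 'I_n}) : feasible S D A = (#|A| <= c)%N.
Proof. by rewrite /feasible sumr_const ler_nat. Qed.

Lemma min_conn_unit_le sch t :
  schedule S D sch -> is_min_conn sch t -> t * n%:R <= c%:R.
Proof.
move=> [feas_sch total] [_ t_le].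
have -> : t * n%:R = \sum_(i : 'I_n) t by rewrite sumr_const card_ord mulr_natr.
apply: le_trans (ler_sum _ (fun i _ => t_le i)) _.
have -> : c%:R = \sum_(p <- sch) p.1 * c%:R by rewrite -mulr_suml total mul1r.
rewrite sum_conn_time !big_seq; apply: ler_sum => p /feas_sch [p_gt0 feas_p].
by rewrite ler_pM2l // ler_nat -feasible_unit.
Qed.

Lemma ktimes_packing_unit_size k bins :
  ktimes_packing S D k bins -> (n * k <= size bins * c)%N.
Proof.
move=> [feas_bins count_k].
have <- : (\sum_(i : 'I_n) k = n * k)%N by rewrite sum_nat_const card_ord.
rewrite -(eq_bigr _ (fun i _ => count_k i)).
rewrite sum_count_mem -sum1_size big_distrl /= !big_seq.
by apply: leq_sum => B /feas_bins; rewrite mul1n feasible_unit.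
Qed.

End UnitDemands.

Section CoSingletons.
Variables (R : realType) (n : nat).
Hypothesis n_gt1 : (1 < n)%N.

Local Notation S := (n.-1%:R : R).
Local Notation D := (fun _ : 'I_n => 1 : R).

Let n_gt0 : (0 < n)%N. Proof. exact: ltnW. Qed.
Let predn_gt0 : (0 < n.-1)%N. Proof. by rewrite -ltnS prednK. Qed.

Definition cosingletons : seq {set 'I_n} := [seq [set~ i] | i <- enum 'I_n].

Definition cosingleton_schedule : seq (R * {set 'I_n}) :=
  [seq (n%:R^-1, B) | B <- cosingletons].

Lemma count_mem_cosingletons j :
  count (fun B : {set 'I_n} => j \in B) cosingletons = n.-1.
Proof.
rewrite count_map -sum1_count big_enum_cond /=.
rewrite (eq_bigl (fun i => i \in [set~ j])); last by move=> i; rewrite !in_setC1 eq_sym.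
by rewrite sum1_card cardsC1 card_ord.
Qed.

Lemma conn_time_cosingleton_schedule j :
  conn_time cosingleton_schedule j = n.-1%:R / n%:R.
Proof.
rewrite /conn_time big_map /= big_const_seq count_mem_cosingletons.
by rewrite iter_addr addr0 mulr_natl.
Qed.

Lemma schedule_cosingleton_schedule : schedule S D cosingleton_schedule.
Proof.
split=> [p /mapP [_ /mapP [i _ ->] ->] /= | ].
  by rewrite invr_gt0 ltr0n n_gt0 feasible_unit cardsC1 card_ord.
rewrite !big_map big_const_seq count_predT -enumT -cardT card_ord iter_addr addr0 -(mulr_natr n%:R^-1).
by rewrite mulVf // pnatr_eq0 -lt0n.
Qed.

Lemma egal_time_cosingleton : egal_time S D (n.-1%:R / n%:R).
Proof.
have n_pos : 0 < (n%:R : R) by rewrite ltr0n.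
split=> [|sch t sch_ok t_min].
  exists cosingleton_schedule; split; first exact: schedule_cosingleton_schedule.
  split=> [|i]; last by rewrite conn_time_cosingleton_schedule.
  by exists (Ordinal n_gt0); rewrite conn_time_cosingleton_schedule.
by rewrite ler_pdivlMr // (min_conn_unit_le sch_ok t_min).
Qed.

Lemma is_OPT_cosingletons : is_OPT S D n.-1 n.
Proof.
split=> [|bins /ktimes_packing_unit_size].
  exists cosingletons; rewrite size_map size_enum_ord; split => //.
  split=> [B /mapP [i _ ->] | ]; last exact: count_mem_cosingletons.
  by rewrite feasible_unit cardsC1 card_ord.
by rewrite leq_pmul2r.
Qed.

Lemma egal_eq_ratio_cosingletons_dvd k : egal_eq_ratio S D k -> (n.-1 %| k)%N.
Proof.
move=> [t [m [t_egal [_ t_ratio]]]].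
rewrite (egal_time_uniq t_egal egal_time_cosingleton) in t_ratio.
have [m0 | m_gt0] := posnP m.
  (* [k / 0 = 0] in a field, while [(n - 1)/n <> 0]. *)
  move: t_ratio; rewrite m0 invr0 mulr0 => /eqP.
  by rewrite mulf_eq0 invr_eq0 !pnatr_eq0 !eqn0Ngt predn_gt0 n_gt0.
move/eqP: t_ratio; rewrite eqr_div ?pnatr_eq0 -?lt0n // -!natrM eqr_nat => /eqP kn_eq.
by rewrite -(Gauss_dvdl _ (coprimePn n_gt0)) -kn_eq dvdn_mulr.
Qed.

End CoSingletons.

Theorem proposition1 (R : realType) (n : nat) (hn : (2 <= n)%N) :
  exists (S : R) (D : 'I_n -> R),
    instance S D /\
    (exists k : nat, (0 < k)%N /\ egal_eq_ratio S D k) /\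
    (forall k : nat, (0 < k)%N -> (k < n.-1)%N -> ~ egal_eq_ratio S D k).
Proof.
have predn_gt0 : (0 < n.-1)%N by rewrite -ltnS prednK // ltnW.
exists n.-1%:R, (fun _ => 1); split; [|split].
- by split=> [|_]; rewrite ?ltr0n ?ltr01 ?ler1n.
- exists n.-1; split=> //; exists (n.-1%:R / n%:R), n.
  by split; [exact: egal_time_cosingleton | split; [exact: is_OPT_cosingletons |]].
- move=> k k_gt0 k_lt /(egal_eq_ratio_cosingletons_dvd hn) /(dvdn_leq k_gt0).
  by rewrite leqNgt k_lt.
Qed.
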